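(* Let $u_{\text{lb}},u_{\text{ub}}\in\mathbb{R}^{n_u}$ with $u_{\text{lb}}\le u_{\text{ub}}$ (componentwise) and let $\mathcal{U}=\{u\in\mathbb{R}^{n_u}\mid u_{\text{lb}}\le u\le u_{\text{ub}}\}$. Let $\mathcal{N}(x;\theta)$ be a ReLU network with $L$ hidden layers and parameters $\theta=\{(W_l,b_l)\}_{l=1}^{L+1}$. Define the network $\mathcal{N}_{\text{sat}}(x)\coloneqq\mathcal{N}(x;\theta_{\text{sat}})$ with $L+2$ hidden layers whose parameters $\theta_{\text{sat}}=\{(W_{l,\text{sat}},b_{l,\text{sat}})\}_{l=1}^{L+3}$ are $(W_{l,\text{sat}},b_{l,\text{sat}})=(W_l,b_l)$ for all $l\in\{1,\dots,L\}$, and $W_{L+1,\text{sat}}=-W_{L+1}$, $b_{L+1,\text{sat}}=u_{\text{ub}}-b_{L+1}$; $W_{L+2,\text{sat}}=-I$, $b_{L+2,\text{sat}}=u_{\text{ub}}-u_{\text{lb}}$; $W_{L+3,\text{sat}}=I$, $b_{L+3,\text{sat}}=u_{\text{lb}}$ (here $I$ is the $n_u\times n_u$ identity). Then $u_{\text{lb}}\le\mathcal{N}_{\text{sat}}(x)\le u_{\text{ub}}$ for all $x\in\mathbb{R}^{n_x}$, and for every $x\in\mathbb{R}^{n_x}$ with $u_{\text{lb}}\le\mathcal{N}(x;\theta)\le u_{\text{ub}}$ one has $\mathcal{N}_{\text{sat}}(x)=\mathcal{N}(x;\theta)$.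
   Context: A ReLU network with $L\ge 1$ hidden layers, input dimension $n_x$, output dimension $n_u$ and hidden widths $n_1,\dots,n_L$ is the map $\mathcal{N}(x;\theta)=W_{L+1}\xi_L+b_{L+1}$, where $\xi_0=x$ and $\xi_l=\max(0,W_l\xi_{l-1}+b_l)$ (maximum taken elementwise) for $l=1,\dots,L$; here $W_1\in\mathbb{R}^{n_1\times n_x}$, $W_l\in\mathbb{R}^{n_l\times n_{l-1}}$ for $2\le l\le L$, $W_{L+1}\in\mathbb{R}^{n_u\times n_L}$, $b_l\in\mathbb{R}^{n_l}$ for $l\le L$ and $b_{L+1}\in\mathbb{R}^{n_u}$. Inequalities between vectors are componentwise. *)

From HB Require Import structures.
From mathcomp Require Import all_boot all_order all_algebra.
Set Implicit Arguments. Unset Strict Implicit. Unset Printing Implicit Defensive.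
Import Order.TTheory GRing.Theory Num.Theory.
Local Open Scope ring_scope.

(* A ReLU network from R^m to R^nu, given as a chain of layers.
   [Hidden W b N]  : a hidden layer xi |-> max(0, W xi + b), followed by N;
   [Out W b]       : the final affine layer xi |-> W xi + b.
   A network with hidden widths n_1,...,n_L is
   Hidden W_1 b_1 (Hidden W_2 b_2 ... (Hidden W_L b_L (Out W_{L+1} b_{L+1}))). *)
Inductive relu_net (R : Type) : nat -> nat -> Type :=
| Out : forall m nu : nat, 'M[R]_(nu, m) -> 'cV[R]_nu -> relu_net R m nu
| Hidden : forall m k nu : nat, 'M[R]_(k, m) -> 'cV[R]_k -> relu_net R k nu ->
    relu_net R m nu.

Arguments Out {R m nu}.
Arguments Hidden {R m k nu}.

Section Nets.
Variable R : realFieldType.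

Definition relu {n : nat} (v : 'cV[R]_n) : 'cV[R]_n :=
  map_mx (fun a => Num.max 0 a) v.

Fixpoint nhidden {m nu : nat} (N : relu_net R m nu) : nat :=
  match N with
  | Out _ _ _ _ => 0%N
  | Hidden _ _ _ _ _ N' => (nhidden N').+1
  end.

Fixpoint eval_net {m nu : nat} (N : relu_net R m nu) : 'cV[R]_m -> 'cV[R]_nu :=
  match N in relu_net _ m nu return 'cV[R]_m -> 'cV[R]_nu with
  | Out _ _ W b => fun x => W *m x + b
  | Hidden _ _ _ W b N' => fun x => eval_net N' (relu (W *m x + b))
  end.

Definition vle {n : nat} (u v : 'cV[R]_n) : Prop := forall i : 'I_n, u i 0 <= v i 0.

Fixpoint sat_net {m nu : nat} (ulb uub : 'cV[R]_nu) (N : relu_net R m nu)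
  : relu_net R m nu :=
  match N in relu_net _ m nu return 'cV[R]_nu -> 'cV[R]_nu -> relu_net R m nu with
  | Out _ _ W b => fun ulb uub =>
      Hidden (- W) (uub - b) (Hidden (- (1%:M : 'M[R]_ _)) (uub - ulb) (Out 1%:M ulb))
  | Hidden _ _ _ W b N' => fun ulb uub => Hidden W b (sat_net ulb uub N')
  end ulb uub.

End Nets.

From HB Require Import structures.
From mathcomp Require Import all_boot all_order all_algebra.
From mathcomp Require Import lra.
Import Order.TTheory GRing.Theory Num.Theory.
Local Open Scope ring_scope.

(* The three appended layers compute, coordinatewise,
   y |-> max(0, (ub - lb) - max(0, ub - y)) + lb, which for lb <= ub is the
   clamp min(ub, max(lb, y)) of y to [lb, ub]: the inner ReLU clips y from
   above at ub, the outer one clips it from below at lb. *)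

Definition saturate {R : realFieldType} {nu : nat} (ulb uub y : 'cV[R]_nu) : 'cV[R]_nu :=
  \col_i (Num.max 0 (uub i 0 - ulb i 0 - Num.max 0 (uub i 0 - y i 0)) + ulb i 0).

Lemma eval_sat_net (R : realFieldType) (m nu : nat) (ulb uub : 'cV[R]_nu)
    (N : relu_net R m nu) (x : 'cV[R]_m) :
  eval_net (sat_net ulb uub N) x = saturate ulb uub (eval_net N x).
Proof.
elim: N ulb uub x => [m' nu' W b | m' k nu' W b N IH] ulb uub x /=; last exact: IH.
apply/matrixP => i j; rewrite !ord1 /relu mul1mx !mulNmx mul1mx !mxE.
by congr (Num.max 0 _ + _); rewrite addrC; congr (_ - Num.max 0 _); lra.
Qed.

Lemma relu_clampE (R : realFieldType) (a b y : R) : a <= b ->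
  Num.max 0 (b - a - Num.max 0 (b - y)) + a = Num.min b (Num.max a y).
Proof.
move=> le_ab; have [le_yb | lt_by] := lerP y b.
  rewrite [Num.max 0 (b - y)]max_r ?subr_ge0 // min_r ?ge_max ?le_ab //.
  have -> : b - a - (b - y) = y - a by lra.
  by rewrite addr_maxl subrK add0r.
rewrite [Num.max 0 (b - y)]max_l ?subr_le0 ?ltW // subr0 max_r ?subr_ge0 //.
by rewrite subrK max_r ?min_l // ltW // (le_lt_trans le_ab).
Qed.

Section Saturate.
Variables (R : realFieldType) (nu : nat) (ulb uub : 'cV[R]_nu).
Hypothesis le_ulb_uub : vle ulb uub.

Lemma saturateE (y : 'cV[R]_nu) (i : 'I_nu) :
  saturate ulb uub y i 0 = Num.min (uub i 0) (Num.max (ulb i 0) (y i 0)).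
Proof. by rewrite mxE relu_clampE. Qed.

Lemma saturate_ge (y : 'cV[R]_nu) : vle ulb (saturate ulb uub y).
Proof. by move=> i; rewrite saturateE le_min le_ulb_uub le_max lexx. Qed.

Lemma saturate_le (y : 'cV[R]_nu) : vle (saturate ulb uub y) uub.
Proof. by move=> i; rewrite saturateE ge_min lexx. Qed.

Lemma saturate_id (y : 'cV[R]_nu) :
  vle ulb y -> vle y uub -> saturate ulb uub y = y.
Proof.
move=> le_ulb_y le_y_uub; apply/matrixP => i j.
by rewrite !ord1 saturateE max_r ?min_r.
Qed.

End Saturate.

Theorem proposition1 (R : realFieldType) (nx nu : nat)
  (ulb uub : 'cV[R]_nu) (N : relu_net R nx nu) :
  vle ulb uub ->
  (1 <= nhidden N)%N ->
  (forall x : 'cV[R]_nx,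
     vle ulb (eval_net (sat_net ulb uub N) x) /\
     vle (eval_net (sat_net ulb uub N) x) uub) /\
  (forall x : 'cV[R]_nx,
     vle ulb (eval_net N x) -> vle (eval_net N x) uub ->
     eval_net (sat_net ulb uub N) x = eval_net N x).
Proof.
move=> le_ulb_uub _; split=> x; rewrite eval_sat_net.
  by split; [exact: saturate_ge | exact: saturate_le].
exact: saturate_id.
Qed.
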